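(* The sum over all finite groups $G$ of the ring homomorphisms $\mathrm{B}^\times(G)\to\mathrm{B}(\mathcal{R})$, $$\bigoplus_G\mathrm{B}^\times(G)\longrightarrow\mathrm{B}(\mathcal{R}),$$ is surjective.
   Context: A rack is a set $R$ with a binary operation $\rhd$ such that every left multiplication $\ell_a\colon b\mapsto a\rhd b$ is a bijection and $a\rhd(b\rhd c)=(a\rhd b)\rhd(a\rhd c)$ for all $a,b,c$. A subrack is a subset $S$ with $\ell_s(S)=S$ for all $s\in S$; a decomposition of $R$ into $S$ and $T$ means $S,T$ are disjoint subracks (possibly empty) with $S\cup T=R$. The Burnside ring of finite racks $\mathrm{B}(\mathcal{R})$ is the abelian group generated by symbols $b(R)$, one for each finite rack $R$, subject to $b(R_1)=b(R_2)$ whenever $R_1\cong R_2$ and $b(R)=b(S)+b(T)$ whenever $R$ decomposes into $S$ and $T$, with ring structure $b(R)b(R')=b(R\times R')$. For a finite group $G$, a crossed $G$-set is a finite $G$-set $X$ with a $G$-equivariant map $\delta\colon X\to\mathrm{Ad}(G)$, where $\mathrm{Ad}(G)$ is $G$ with conjugation action. The crossed Burnside ring $\mathrm{B}^\times(G)$ is the Grothendieck group of isomorphism classes of finite crossed $G$-sets with respect to disjoint union (with its ring structure). The homomorphism $\mathrm{B}^\times(G)\to\mathrm{B}(\mathcal{R})$ sends the class of $\delta\colon X\to\mathrm{Ad}(G)$ to $b(X,\rhd)$, where $x\rhd y=\delta(x)y$. *)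

From mathcomp Require Import all_boot all_fingroup.
Set Implicit Arguments. Unset Strict Implicit. Unset Printing Implicit Defensive.
Local Open Scope group_scope.

Record rack := Rack {
  rcar :> finType;
  rop : rcar -> rcar -> rcar;
  rop_bij : forall a, bijective (rop a);
  rop_dist : forall a b c, rop a (rop b c) = rop (rop a b) (rop a c) }.

Definition subrack (R : rack) (S : {set R}) : Prop :=
  forall s, s \in S -> [set rop s x | x in S] = S.

Definition rack_iso (R1 R2 : rack) : Prop :=
  exists f : R1 -> R2, bijective f /\ forall a b, f (rop a b) = rop (f a) (f b).

Section SubrackRack.
Variables (R : rack) (S : {set R}) (hS : subrack S).
Definition sr_car : finType := {x : R | x \in S}.

Lemma sr_closed (a b : sr_car) : rop (val a) (val b) \in S.
Proof.
rewrite -[in X in _ \in X](hS (valP a)); apply/imsetP; exists (val b) => //.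
exact: valP.
Qed.

Definition sr_op (a b : sr_car) : sr_car := exist (fun x : R => x \in S) _ (sr_closed a b).

Lemma sr_op_bij a : bijective (sr_op a).
Proof.
apply: injF_bij => x y /(congr1 val) /= H; apply: val_inj.
exact: (bij_inj (rop_bij (val a))).
Qed.

Lemma sr_op_dist a b c : sr_op a (sr_op b c) = sr_op (sr_op a b) (sr_op a c).
Proof. apply: val_inj; exact: rop_dist. Qed.

Definition subrack_rack : rack := Rack sr_op_bij sr_op_dist.
End SubrackRack.

(* ---------- The Burnside ring B(R) of finite racks (additive group) ----
   Elements are represented by formal words of signed generators
   (true, R) = +b(R), (false, R) = -b(R); beq is the congruence generated by
   the free-abelian-group laws and the defining relations, so the
   quotient seq rterm / beq is exactly the presented group B(R). *)
Definition rterm := (bool * rack)%type.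

Inductive beq : seq rterm -> seq rterm -> Prop :=
| beq_refl x : beq x x
| beq_sym x y : beq x y -> beq y x
| beq_trans x y z : beq x y -> beq y z -> beq x z
| beq_swap (u v : seq rterm) (a b : rterm) :
    beq (u ++ a :: b :: v) (u ++ b :: a :: v)
| beq_cancel (u v : seq rterm) (s : bool) (R : rack) :
    beq (u ++ (s, R) :: (~~ s, R) :: v) (u ++ v)
| beq_iso (u v : seq rterm) (s : bool) (R1 R2 : rack) :
    rack_iso R1 R2 -> beq (u ++ (s, R1) :: v) (u ++ (s, R2) :: v)
| beq_decomp (u v : seq rterm) (s : bool) (R : rack) (S T : {set R})
    (hS : subrack S) (hT : subrack T) :
    [disjoint S & T] -> S :|: T = setT ->
    beq (u ++ (s, R) :: v)
        (u ++ (s, subrack_rack hS) :: (s, subrack_rack hT) :: v).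

Record crossed_set (gT : finGroupType) := CrossedSet {
  cX :> finType;
  cact : gT -> cX -> cX;
  cact1 : forall x, cact 1 x = x;
  cactM : forall g h x, cact (g * h) x = cact g (cact h x);
  cdelta : cX -> gT;
  cdeltaJ : forall g x, cdelta (cact g x) = g * cdelta x * g^-1 }.

Section CrossedRack.
Variables (gT : finGroupType) (X : crossed_set gT).
Definition cr_op (x y : X) : X := cact (cdelta x) y.

Lemma cr_op_bij x : bijective (cr_op x).
Proof.
exists (cact (cdelta x)^-1) => y; rewrite /cr_op -cactM ?mulVg ?mulgV cact1 //.
Qed.

Lemma cr_op_dist a b c : cr_op a (cr_op b c) = cr_op (cr_op a b) (cr_op a c).
Proof.
rewrite /cr_op cdeltaJ -!cactM; congr cact.
by rewrite -!mulgA mulVg mulg1.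
Qed.

Definition crossed_rack : rack := Rack cr_op_bij cr_op_dist.
End CrossedRack.

(* an element of  (+)_G B^x(G)  is a finite signed sum of classes of crossed
   G-sets for various finite groups G *)
Definition xterm := (bool * {gT : finGroupType & crossed_set gT})%type.
Definition xterm_image (t : xterm) : rterm := (t.1, crossed_rack (projT2 t.2)).

From mathcomp Require Import all_boot all_fingroup.
Set Implicit Arguments. Unset Strict Implicit. Unset Printing Implicit Defensive.
Local Open Scope group_scope.

(* Every finite rack R is the rack of a crossed set: let G = Aut(R) act on R
   and put delta(x) = l_x, which lies in Aut(R) by self-distributivity.
   Equivariance delta(g x) = g delta(x) g^-1 says l_(g x) = g l_x g^-1, i.e. that
   g is a rack automorphism, and x |> y = delta(x) y by construction. Hence
   every generator b(R) of B(R) is the image of a class in B^x(Aut R). *)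

Section RackAutomorphisms.
Variable R : rack.

Definition rack_aut : {set {perm R}} :=
  [set p : {perm R} | [forall a, forall b, p (rop a b) == rop (p a) (p b)]].

Lemma rack_autP (p : {perm R}) :
  reflect (forall a b, p (rop a b) = rop (p a) (p b)) (p \in rack_aut).
Proof.
rewrite inE; apply: (iffP forallP) => [H a b | H a].
  by apply/eqP; move/forallP: (H a).
by apply/forallP => b; rewrite H.
Qed.

Lemma rack_aut_group_set : group_set rack_aut.
Proof.
apply/group_setP; split; first by apply/rack_autP => a b; rewrite !perm1.
move=> p q /rack_autP Hp /rack_autP Hq; apply/rack_autP => a b.
by rewrite !permM Hp Hq.
Qed.

Canonical rack_aut_group := Group rack_aut_group_set.

Definition rack_lmul (x : R) : {perm R} := perm (bij_inj (rop_bij x)).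

Lemma rack_lmulE x y : rack_lmul x y = rop x y.
Proof. by rewrite permE. Qed.

Lemma rack_lmul_aut x : rack_lmul x \in rack_aut.
Proof. by apply/rack_autP => a b; rewrite !rack_lmulE rop_dist. Qed.

Lemma rack_lmul_autE p x :
  p \in rack_aut -> rack_lmul (p x) = p^-1 * rack_lmul x * p.
Proof.
move=> /rack_autP Hp; apply/permP => y.
by rewrite !permM !rack_lmulE -{1}(permKV p y) -Hp.
Qed.

Definition aut_type := subg_of rack_aut_group.

(* Permutations compose left to right, [(p * q) x = q (p x)], so the left
   action of Aut(R) on R is [g . x = g^-1 x] and [delta x] is [l_x^-1]. *)
Definition aut_act (g : aut_type) (x : R) : R := (sgval g)^-1 x.

Definition aut_delta (x : R) : aut_type := subg rack_aut_group (rack_lmul x)^-1.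

Lemma aut_act1 x : aut_act 1 x = x.
Proof. by rewrite /aut_act invg1 perm1. Qed.

Lemma aut_actM g h x : aut_act (g * h) x = aut_act g (aut_act h x).
Proof. by rewrite /aut_act invMg permM. Qed.

Lemma aut_deltaJ g x : aut_delta (aut_act g x) = g * aut_delta x * g^-1.
Proof.
apply: subg_inj; rewrite /aut_delta /aut_act /=.
rewrite !subgK ?groupV ?rack_lmul_aut // rack_lmul_autE ?groupV ?subgP //.
by rewrite invgK !invMg invgK mulgA.
Qed.

Definition aut_crossed_set : crossed_set aut_type :=
  CrossedSet aut_act1 aut_actM aut_deltaJ.

Lemma rack_iso_aut_crossed_rack : rack_iso R (crossed_rack aut_crossed_set).
Proof.
exists id; split; first exact: (Bijective (fun=> erefl) (fun=> erefl)).
move=> a b; rewrite /= /cr_op /= /aut_act /aut_delta.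
by rewrite subgK ?groupV ?rack_lmul_aut // invgK rack_lmulE.
Qed.

End RackAutomorphisms.

Lemma beq_catl w u v : beq u v -> beq (w ++ u) (w ++ v).
Proof.
elim=> {u v} [x | x y _ H | x y z _ H1 _ H2 | u v a b | u v s R
  | u v s R1 R2 Hi | u v s R S T hS hT Hd Hc]; rewrite ?catA.
- exact: beq_refl.
- exact: beq_sym.
- exact: beq_trans H2.
- exact: beq_swap.
- exact: beq_cancel.
- exact: beq_iso.
- exact: beq_decomp.
Qed.

Lemma beq_cons_iso s (R1 R2 : rack) u v :
  rack_iso R1 R2 -> beq u v -> beq ((s, R1) :: u) ((s, R2) :: v).
Proof.
move=> iso12 /(beq_catl [:: (s, R1)]) /= Huv.
exact: beq_trans Huv (beq_iso [::] v s iso12).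
Qed.

Theorem proposition8p11 :
  forall x : seq rterm, exists y : seq xterm, beq x (map xterm_image y).
Proof.
elim=> [|[s R] x [y Hy]]; first by exists [::]; exact: beq_refl.
exists ((s, existT (@crossed_set) (aut_type R) (aut_crossed_set R)) :: y).
exact: beq_cons_iso (rack_iso_aut_crossed_rack R) Hy.
Qed.
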